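(* Let $S_X,S_Y$ be finite nonempty action sets, $\lambda\in[0,1)$, and let $\varphi(s_X,s_Y)=\phi_X(s_X)+\phi_Y(s_Y)$ be additive, with $\phi_X:S_X\to\mathbb{R}$, $\phi_Y:S_Y\to\mathbb{R}$. Then there exists a $(\varphi,\lambda)$-autocratic behavioral strategy for $X$ if and only if $\Phi_X^+\neq\emptyset$, $\Phi_X^-\neq\emptyset$, and either (i) $\phi_X$ is constant, or (ii) $\phi_X$ is non-constant and $\lambda\ge\lambda_{\min}$, where $$\lambda_{\min}=\frac{\max_{s_Y\in S_Y}\phi_Y(s_Y)-\min_{s_Y\in S_Y}\phi_Y(s_Y)}{\max_{s_X\in S_X}\phi_X(s_X)-\min_{s_X\in S_X}\phi_X(s_X)}.$$
   Context: Two players $X,Y$ play a repeated game with finite action sets $S_X,S_Y$; $\Delta(S)$ denotes the probability distributions on $S$. $\varphi$ is extended to mixed actions in its first argument by $\varphi(\tau_X,s_Y)=\mathbb{E}_{s_X\sim\tau_X}[\varphi(s_X,s_Y)]$. Histories: $\mathcal{H}=\bigcup_{T\ge0}(S_X\times S_Y)^T$. A behavioral strategy for $X$ is a map $\sigma_X:\mathcal{H}\to\Delta(S_X)$, similarly for $Y$; players independently draw actions each round from their strategies evaluated at the history of realized action pairs, and $\mathbb{E}_{\sigma_X,\sigma_Y}$ is the expectation over the resulting play. $\sigma_X$ is $(\varphi,\lambda)$-autocratic if for every behavioral strategy $\sigma_Y$ of $Y$, $\mathbb{E}_{\sigma_X,\sigma_Y}\big[(1-\lambda)\sum_{t\ge0}\lambda^t\varphi(s_X^t,s_Y^t)\big]=0$.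 $\Phi_X^+=\{\tau_X\in\Delta(S_X):\min_{s_Y}\varphi(\tau_X,s_Y)\ge0\}$ and $\Phi_X^-=\{\tau_X\in\Delta(S_X):\max_{s_Y}\varphi(\tau_X,s_Y)\le0\}$. *)

From HB Require Import structures.
From mathcomp Require Import all_boot all_order all_algebra.
From mathcomp Require Import all_classical all_reals all_analysis.
Set Implicit Arguments. Unset Strict Implicit. Unset Printing Implicit Defensive.
Import Order.TTheory GRing.Theory Num.Theory numFieldNormedType.Exports.
Local Open Scope ring_scope.
Local Open Scope classical_set_scope.

Section Game.
Variables (R : realType) (SX SY : finType).

Definition is_dist (S : finType) (tau : {ffun S -> R}) : Prop :=
  (forall s, 0 <= tau s) /\ \sum_(s : S) tau s = 1.

(* histories: finite sequences of realized action pairs, in chronological order *)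
Definition history := seq (SX * SY).

Definition stratX := history -> {ffun SX -> R}.
Definition stratY := history -> {ffun SY -> R}.
Definition is_stratX (s : stratX) : Prop := forall h, is_dist (s h).
Definition is_stratY (s : stratY) : Prop := forall h, is_dist (s h).

(* probability that play continues along [h] given past history [past] *)
Fixpoint hprob (sX : stratX) (sY : stratY) (past : history) (h : history) : R :=
  match h with
  | [::] => 1
  | (x, y) :: h' => sX past x * sY past y * hprob sX sY (rcons past (x, y)) h'
  end.

Definition stage_payoff (phi : SX -> SY -> R) (sX : stratX) (sY : stratY)
    (t : nat) : R :=
  \sum_(h : t.-tuple (SX * SY))
     hprob sX sY [::] h *
     \sum_(x : SX) \sum_(y : SY) sX h x * sY h y * phi x y.

(* (phi,lambda)-autocratic: the expected normalized discounted sum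
   (1-lambda) sum_t lambda^t phi(s^t) equals 0 for every strategy of Y
   (the expectation of the series is the series of expectations, phi bounded) *)
Definition autocratic (phi : SX -> SY -> R) (lam : R) (sX : stratX) : Prop :=
  forall sY : stratY, is_stratY sY ->
    (fun n => \sum_(t < n) (1 - lam) * lam ^+ t * stage_payoff phi sX sY t)
      @ \oo --> (0 : R).

Definition phi_mixed (phi : SX -> SY -> R) (tau : {ffun SX -> R}) (y : SY) : R :=
  \sum_(x : SX) tau x * phi x y.

Definition PhiPlus (phi : SX -> SY -> R) : set {ffun SX -> R} :=
  [set tau | is_dist tau /\ forall y, 0 <= phi_mixed phi tau y].
Definition PhiMinus (phi : SX -> SY -> R) : set {ffun SX -> R} :=
  [set tau | is_dist tau /\ forall y, phi_mixed phi tau y <= 0].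

End Game.

Definition fmax (R : realType) (S : finType) (s0 : S) (f : S -> R) : R :=
  \big[Num.max/f s0]_(s : S) f s.
Definition fmin (R : realType) (S : finType) (s0 : S) (f : S -> R) : R :=
  \big[Num.min/f s0]_(s : S) f s.

Definition lambda_min (R : realType) (SX SY : finType) (x0 : SX) (y0 : SY)
    (phiX : SX -> R) (phiY : SY -> R) : R :=
  (fmax y0 phiY - fmin y0 phiY) / (fmax x0 phiX - fmin x0 phiX).

From HB Require Import structures.
From mathcomp Require Import all_boot all_order all_algebra.
From mathcomp Require Import all_classical all_reals all_analysis.
From mathcomp Require Import lra ring.
Import Order.TTheory GRing.Theory Num.Theory numFieldNormedType.Exports.
Local Open Scope ring_scope.
Local Open Scope classical_set_scope.
Set Implicit Arguments.
Unset Strict Implicit.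
Unset Printing Implicit Defensive.

(* Let m, M be the extreme values of phiX and a, b those of phiY.  The
   conditions of the theorem amount to M + a >= 0, m + b <= 0 and
   b - a <= lam (M - m).

   Necessity: against the stationary strategy "always play y" every stage
   payoff lies in [m + phiY y, M + phiY y], and the first one is
   mu + phiY y with mu independent of y, since X has seen nothing yet.
   Comparing the vanishing discounted sums for the minimising action ya and
   the maximising action yb of phiY over one stage gives the three
   inequalities.

   Sufficiency: X carries a promise W, the normalised payoff still owed,
   starting at W = 0 and kept in [(m + b) / (1 - lam), (M + a) / (1 - lam)].
   In state W it mixes its two extreme actions so that phiX has mean p(W),
   and after Y plays y it moves to W' = (W - p(W) - phiY y) / lam.  Then each
   stage payoff is E W_t - lam E W_(t+1), so the discounted sum telescopes to
   -(1 - lam) lam^n E W_n -> 0; the gap condition is exactly what keeps W'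
   in the interval for every y. *)

Section DiscountedSums.
Variables (R : realType) (lam : R).
Hypotheses (lam_ge0 : 0 <= lam) (lam_lt1 : lam < 1).

Let one_sub_lam_ge0 : 0 <= 1 - lam. Proof. by rewrite subr_ge0 ltW. Qed.

Let cvg_expr_scaled (c : R) : (fun n => c * lam ^+ n) @ \oo --> 0.
Proof. by apply: cvg_geometric; rewrite ger0_norm. Qed.

Lemma discounted_sum_ge0 (u : nat -> R) (s : nat) (d : R) :
  (forall t, (s <= t)%N -> u t <= d) ->
  (fun n => \sum_(t < n) (1 - lam) * lam ^+ t * u t) @ \oo --> 0 ->
  0 <= \sum_(t < s) (1 - lam) * lam ^+ t * u t + lam ^+ s * d.
Proof.
move=> u_le cvg_u.
pose v n := \sum_(t < n) (1 - lam) * lam ^+ t * u t + d * lam ^+ n.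
have v_decr k : v (s + k)%N <= v s.
  elim: k => [|k IHk]; first by rewrite addn0.
  apply: le_trans IHk; rewrite /v addnS big_ord_recr /= -addrA lerD2l exprS.
  have : u (s + k)%N <= d by apply: u_le; rewrite leq_addr.
  have : 0 <= (1 - lam) * lam ^+ (s + k) by rewrite mulr_ge0 ?exprn_ge0.
  nra.
have cvg_v : v @ \oo --> 0.
  by rewrite -[0]addr0; apply: cvgD => //; apply: cvg_expr_scaled.
rewrite mulrC; apply: (cvgr_to_le cvg_v); near=> n.
rewrite -(subnKC (_ : (s <= n)%N)); first exact: v_decr.
by near: n; apply: nbhs_infty_ge.
Unshelve. all: by end_near.
Qed.

Lemma discounted_sum_le0 (u : nat -> R) (s : nat) (d : R) :
  (forall t, (s <= t)%N -> d <= u t) ->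
  (fun n => \sum_(t < n) (1 - lam) * lam ^+ t * u t) @ \oo --> 0 ->
  \sum_(t < s) (1 - lam) * lam ^+ t * u t + lam ^+ s * d <= 0.
Proof.
move=> le_u cvg_u.
have cvg_Nu : (fun n => \sum_(t < n) (1 - lam) * lam ^+ t * - u t) @ \oo --> 0.
  have -> : (fun n => \sum_(t < n) (1 - lam) * lam ^+ t * - u t) =
            (fun n => - \sum_(t < n) (1 - lam) * lam ^+ t * u t).
    by apply: funext => n; rewrite -sumrN; apply: eq_bigr => t _; rewrite mulrN.
  by rewrite -[X in _ --> X]oppr0; apply: cvgN.
have := @discounted_sum_ge0 (fun t => - u t) s (- d) _ cvg_Nu.
rewrite -oppr_ge0 opprD -sumrN -mulrN.
under [in X in X -> _]eq_bigr do rewrite mulrN.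
by apply=> t /le_u; rewrite lerN2.
Qed.

Lemma discounted_telescope_cvg0 (w : nat -> R) (C : R) :
  w 0%N = 0 -> (forall n, `|w n| <= C) ->
  (fun n => \sum_(t < n) (1 - lam) * lam ^+ t * (w t - lam * w t.+1)) @ \oo --> 0.
Proof.
move=> w0 w_bnd.
have partial n : \sum_(t < n) (1 - lam) * lam ^+ t * (w t - lam * w t.+1) =
                 - ((1 - lam) * lam ^+ n * w n).
  elim: n => [|n IHn]; first by rewrite big_ord0 w0 mulr0 oppr0.
  by rewrite big_ord_recr /= IHn exprS; ring.
under eq_fun do rewrite partial.
have bound n : `|(1 - lam) * lam ^+ n * w n| <= (1 - lam) * C * lam ^+ n.
  rewrite normrM ger0_norm ?mulr_ge0 ?exprn_ge0 //.
  by rewrite mulrAC ler_wpM2r ?exprn_ge0 // ler_wpM2l.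
apply: (@squeeze_cvgr _ _ _ _ (fun n => - ((1 - lam) * C * lam ^+ n))
          (fun n => (1 - lam) * C * lam ^+ n)).
- by near=> n; rewrite -ler_norml normrN.
- by rewrite -oppr0; apply: cvgN; apply: cvg_expr_scaled.
- exact: cvg_expr_scaled.
Unshelve. all: by end_near.
Qed.

End DiscountedSums.

Section Distributions.
Variables (R : realType) (S : finType).
Implicit Types (p : {ffun S -> R}) (f : S -> R).

Definition mean p f : R := \sum_(s : S) p s * f s.

Definition point_dist (c : S) : {ffun S -> R} := [ffun s => (s == c)%:R].

Definition mix2 (s1 s2 : S) (alpha : R) : {ffun S -> R} :=
  [ffun s => (1 - alpha) * (s == s1)%:R + alpha * (s == s2)%:R].

Lemma sum_indicator (c : S) (F : S -> R) : \sum_(s : S) (s == c)%:R * F s = F c.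
Proof.
rewrite (bigD1 c) //= eqxx mul1r big1 ?addr0 // => s /negbTE->.
by rewrite mul0r.
Qed.

Lemma sum_indicator1 (c : S) : \sum_(s : S) ((s == c)%:R : R) = 1.
Proof.
rewrite -[RHS](sum_indicator c (fun _ => 1)).
by apply: eq_bigr => s _; rewrite mulr1.
Qed.

Lemma point_dist_is_dist c : is_dist (point_dist c).
Proof.
split=> [s|]; first by rewrite ffunE ler0n.
by under eq_bigr do rewrite ffunE; rewrite sum_indicator1.
Qed.

Lemma mean_point_dist c f : mean (point_dist c) f = f c.
Proof. by rewrite /mean; under eq_bigr do rewrite ffunE; rewrite sum_indicator. Qed.

Lemma mix2_is_dist s1 s2 alpha : 0 <= alpha <= 1 -> is_dist (mix2 s1 s2 alpha).
Proof.
case/andP=> alpha_ge0 alpha_le1; split=> [s|].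
  by rewrite ffunE addr_ge0 // mulr_ge0 ?ler0n ?subr_ge0.
under eq_bigr do rewrite ffunE.
by rewrite big_split /= -!mulr_sumr !sum_indicator1 !mulr1 subrK.
Qed.

Lemma mean_mix2 s1 s2 alpha f :
  mean (mix2 s1 s2 alpha) f = (1 - alpha) * f s1 + alpha * f s2.
Proof.
rewrite /mean; under eq_bigr do rewrite ffunE mulrDl -!mulrA.
by rewrite big_split /= -!mulr_sumr !sum_indicator.
Qed.

Lemma mix2_interp s1 s2 f (x : R) : f s1 <= x <= f s2 ->
  let q := mix2 s1 s2 ((x - f s1) / (f s2 - f s1)) in is_dist q /\ mean q f = x.
Proof.
case/andP=> le1 le2 q; rewrite /q mean_mix2.
have [eq12|neq12] := eqVneq (f s2 - f s1) 0.
  rewrite eq12 invr0 mulr0 subr0 mul1r mul0r addr0; split.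
    by apply: mix2_is_dist; rewrite lexx ler01.
  by move: le1 le2 eq12; lra.
have gap_gt0 : 0 < f s2 - f s1 by rewrite lt_def neq12 subr_ge0 (le_trans le1).
split; last by field.
apply: mix2_is_dist; rewrite divr_ge0 ?(ltW gap_gt0) ?subr_ge0 //=.
by rewrite ler_pdivrMr // mul1r lerD2r.
Qed.

Section OnDistribution.
Variable p : {ffun S -> R}.
Hypothesis p_dist : is_dist p.

Lemma mean_cst (c : R) : mean p (fun _ => c) = c.
Proof. by have [_ sum_p] := p_dist; rewrite /mean -mulr_suml sum_p mul1r. Qed.

Lemma mean_affine (c k : R) f : mean p (fun s => c + k * f s) = c + k * mean p f.
Proof.
have [_ sum_p] := p_dist.
rewrite /mean; under eq_bigr do rewrite mulrDr [p _ * (k * _)]mulrCA.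
by rewrite big_split /= -mulr_suml sum_p mul1r -mulr_sumr.
Qed.

Lemma mean_le f (c : R) : (forall s, f s <= c) -> mean p f <= c.
Proof.
have [p_ge0 sum_p] := p_dist.
move=> f_le; rewrite -[c]mul1r -sum_p mulr_suml.
by apply: ler_sum => s _; rewrite ler_wpM2l.
Qed.

Lemma mean_ge f (c : R) : (forall s, c <= f s) -> c <= mean p f.
Proof.
have [p_ge0 sum_p] := p_dist.
move=> le_f; rewrite -[c]mul1r -sum_p mulr_suml.
by apply: ler_sum => s _; rewrite ler_wpM2l.
Qed.

End OnDistribution.
End Distributions.

Lemma sum_tuple_rcons (V : nmodType) (T : finType) (t : nat)
    (F : t.+1.-tuple T -> V) :
  \sum_(h : t.+1.-tuple T) F h = \sum_(h : t.-tuple T) \sum_(z : T) F [tuple of rcons h z].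
Proof.
have eta (h : t.+1.-tuple T) :
    val h = rcons (belast (thead h) (behead h)) (last (thead h) (behead h)).
  by rewrite -lastI; case: h => [[]].
rewrite pair_big /=.
apply: (reindex (fun p : t.-tuple T * T => [tuple of rcons p.1 p.2])).
exists (fun h => ([tuple of belast (thead h) (behead h)], last (thead h) (behead h)))
  => [[p z] _ | h _]; last by apply: val_inj; rewrite /= -eta.
have /rcons_inj[belast_p last_z] := eta [tuple of rcons p z].
by congr pair; [apply: val_inj|].
Qed.

Section Play.
Variables (R : realType) (SX SY : finType).
Implicit Types (sX : stratX R SX SY) (sY : stratY R SX SY) (h : history SX SY).

Definition expect sX sY (t : nat) (F : history SX SY -> R) : R :=
  \sum_(h : t.-tuple (SX * SY)) hprob sX sY [::] h * F h.

Definition next_expect sX sY h (F : history SX SY -> R) : R :=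
  \sum_(x : SX) \sum_(y : SY) sX h x * sY h y * F (rcons h (x, y)).

Lemma hprob_rcons sX sY past h x y :
  hprob sX sY past (rcons h (x, y)) =
  hprob sX sY past h * (sX (past ++ h) x * sY (past ++ h) y).
Proof.
elim: h past => [|[x' y'] h IHh] past /=; first by rewrite cats0 mulr1 mul1r.
by rewrite IHh -cat_rcons !mulrA.
Qed.

Lemma expect0 sX sY F : expect sX sY 0 F = F [::].
Proof.
rewrite /expect (big_pred1 [tuple]) ?mul1r // => h.
by apply/esym/eqP/val_inj; case: h => [[]].
Qed.

Lemma expectS sX sY t F :
  expect sX sY t.+1 F = expect sX sY t (fun h => next_expect sX sY h F).
Proof.
rewrite /expect sum_tuple_rcons; apply: eq_bigr => h _.
rewrite /next_expect pair_big /= mulr_sumr; apply: eq_bigr => -[x y] _ /=.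
by rewrite hprob_rcons !mulrA.
Qed.

Lemma expect_lin sX sY t F G (k : R) :
  expect sX sY t (fun h => F h + k * G h) = expect sX sY t F + k * expect sX sY t G.
Proof.
rewrite /expect mulr_sumr -big_split; apply: eq_bigr => h _ /=.
by rewrite mulrDr mulrCA.
Qed.

Lemma sum_prod_fst (p : {ffun SX -> R}) (q : {ffun SY -> R}) (f : SX -> R) :
  is_dist q -> \sum_(x : SX) \sum_(y : SY) p x * q y * f x = mean p f.
Proof.
case=> _ sum_q; apply: eq_bigr => x _.
by rewrite -mulr_suml -mulr_sumr sum_q mulr1.
Qed.

Lemma sum_prod_snd (p : {ffun SX -> R}) (q : {ffun SY -> R}) (g : SY -> R) :
  is_dist p -> \sum_(x : SX) \sum_(y : SY) p x * q y * g y = mean q g.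
Proof.
case=> _ sum_p; rewrite exchange_big; apply: eq_bigr => y _ /=.
by rewrite -mulr_suml -mulr_suml sum_p mul1r.
Qed.

Section Strategies.
Variables (sX : stratX R SX SY) (sY : stratY R SX SY).
Hypotheses (sX_strat : is_stratX sX) (sY_strat : is_stratY sY).
Hint Resolve sX_strat sY_strat : core.

Lemma hprob_ge0 past h : 0 <= hprob sX sY past h.
Proof.
elim: h past => [|[x y] h IHh] past //=.
by rewrite !mulr_ge0 //; [case: (sX_strat past) | case: (sY_strat past)].
Qed.

Lemma next_expect_cst h (c : R) : next_expect sX sY h (fun _ => c) = c.
Proof. by rewrite /next_expect sum_prod_snd ?mean_cst. Qed.

Lemma expect_cst t (c : R) : expect sX sY t (fun _ => c) = c.
Proof.
elim: t => [|t IHt]; first by rewrite expect0.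
by rewrite expectS; under eq_fun do rewrite next_expect_cst.
Qed.

Lemma expect_le t F (c : R) : (forall h, F h <= c) -> expect sX sY t F <= c.
Proof.
move=> F_le; rewrite -[leRHS](expect_cst t); apply: ler_sum => h _.
by rewrite ler_wpM2l ?hprob_ge0.
Qed.

Lemma expect_ge t F (c : R) : (forall h, c <= F h) -> c <= expect sX sY t F.
Proof.
move=> le_F; rewrite -[leLHS](expect_cst t); apply: ler_sum => h _.
by rewrite ler_wpM2l ?hprob_ge0.
Qed.

Lemma stage_payoff_add (fX : SX -> R) (fY : SY -> R) t :
  stage_payoff (fun x y => fX x + fY y) sX sY t =
  expect sX sY t (fun h => mean (sX h) fX + mean (sY h) fY).
Proof.
apply: eq_bigr => h _; congr (_ * _).
under eq_bigr do under eq_bigr do rewrite mulrDr.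
under eq_bigr do rewrite big_split /=.
by rewrite big_split /= sum_prod_fst ?sum_prod_snd.
Qed.

End Strategies.
End Play.

Definition constY (R : realType) (SX SY : finType) (y : SY) : stratY R SX SY :=
  fun _ => point_dist R y.

Lemma constY_strat (R : realType) (SX SY : finType) (y : SY) :
  is_stratY (@constY R SX SY y).
Proof. by move=> h; apply: point_dist_is_dist. Qed.

Section Necessity.
Variables (R : realType) (SX SY : finType) (phiX : SX -> R) (phiY : SY -> R).
Variables (lam m M : R) (sX : stratX R SX SY).
Hypotheses (lam_ge0 : 0 <= lam) (lam_lt1 : lam < 1).
Hypotheses (phiX_ge : forall x, m <= phiX x) (phiX_le : forall x, phiX x <= M).
Hypotheses (sX_strat : is_stratX sX)
  (sX_auto : autocratic (fun x y => phiX x + phiY y) lam sX).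

Let u y t := stage_payoff (fun x y => phiX x + phiY y) sX (@constY R SX SY y) t.

Let u_le y t : u y t <= M + phiY y.
Proof.
rewrite /u stage_payoff_add //; last exact: constY_strat.
apply: (expect_le sX_strat (@constY_strat R SX SY y)) => h.
by rewrite mean_point_dist lerD2r mean_le.
Qed.

Let u_ge y t : m + phiY y <= u y t.
Proof.
rewrite /u stage_payoff_add //; last exact: constY_strat.
apply: (expect_ge sX_strat (@constY_strat R SX SY y)) => h.
by rewrite mean_point_dist lerD2r mean_ge.
Qed.

Let u0 y : u y 0 = mean (sX [::]) phiX + phiY y.
Proof. by rewrite /u stage_payoff_add ?expect0 ?mean_point_dist //; exact: constY_strat. Qed.

Lemma autocratic_additive_necessary (ya yb : SY) :
  [/\ 0 <= M + phiY ya, m + phiY yb <= 0 & phiY yb - phiY ya <= lam * (M - m)].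
Proof.
have cvg_u y := sX_auto (@constY_strat R SX SY y).
have up s := discounted_sum_ge0 lam_ge0 lam_lt1 (s := s) (fun t _ => u_le ya t) (cvg_u ya).
have lo s := discounted_sum_le0 lam_ge0 lam_lt1 (s := s) (fun t _ => u_ge yb t) (cvg_u yb).
have := up 0%N; have := lo 0%N; rewrite !big_ord0 !expr0 !add0r !mul1r => lo0 up0.
split=> //.
have := up 1%N; have := lo 1%N; rewrite !big_ord1 !expr0 !expr1 !mulr1 -!/(u _ 0) !u0.
lra.
Qed.

End Necessity.

Section Sufficiency.
Variables (R : realType) (SX SY : finType) (phiX : SX -> R) (phiY : SY -> R).
Variables (lam a b : R) (xm xM : SX).
Local Notation m := (phiX xm).
Local Notation M := (phiX xM).
Hypotheses (lam_ge0 : 0 <= lam) (lam_lt1 : lam < 1).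
Hypothesis (m_le_M : m <= M).
Hypotheses (phiY_ge : forall y, a <= phiY y) (phiY_le : forall y, phiY y <= b).
Hypotheses (Ma_ge0 : 0 <= M + a) (mb_le0 : m + b <= 0)
  (gap_le : b - a <= lam * (M - m)).

Definition promise_lo : R := (m + b) / (1 - lam).
Definition promise_hi : R := (M + a) / (1 - lam).
Local Notation L := promise_lo.
Local Notation U := promise_hi.

Let one_sub_lam_neq0 : 1 - lam != 0. Proof. by rewrite subr_eq0 eq_sym lt_eqF. Qed.
Let L_fix : L - lam * L = m + b. Proof. by rewrite /promise_lo; field. Qed.
Let U_fix : U - lam * U = M + a. Proof. by rewrite /promise_hi; field. Qed.
Let L_le0 : L <= 0. Proof. by rewrite /promise_lo pmulr_lle0 // invr_gt0 subr_gt0. Qed.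
Let U_ge0 : 0 <= U. Proof. by rewrite /promise_hi divr_ge0 // subr_ge0 ltW. Qed.
Let LU_gap : b - a <= lam * (U - L).
Proof.
rewrite -(ler_pM2r (_ : 0 < 1 - lam)) ?subr_gt0 //.
have -> : lam * (U - L) * (1 - lam) = lam * ((U - lam * U) - (L - lam * L)) by ring.
by rewrite U_fix L_fix; move: gap_le; lra.
Qed.

Definition aim (W : R) : R := Num.max m (W - a - lam * U).

(* For lam = 0 this is 0, as x / 0 = 0; the gap condition then makes phiY
   constant, so no promise needs to be carried over. *)
Definition next_promise (W : R) (y : SY) : R := (W - aim W - phiY y) / lam.

Definition promise (h : history SX SY) : R :=
  foldl (fun W xy => next_promise W xy.2) 0 h.

Definition autocrat : stratX R SX SY :=
  fun h => mix2 xm xM ((aim (promise h) - m) / (M - m)).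

Let aim_cases W : [/\ m <= aim W, W - a - lam * U <= aim W &
                      aim W = m \/ aim W = W - a - lam * U].
Proof. by rewrite /aim le_max lexx le_max lexx orbT maxEle; case: ifP; split; auto. Qed.

Section InRange.
Variable W : R.
Hypothesis W_range : L <= W <= U.

Lemma aim_range : m <= aim W <= M.
Proof.
have [aim_ge _ _] := aim_cases W; case/andP: W_range => _ W_le.
by rewrite aim_ge /aim ge_max m_le_M /=; move: W_le U_fix; lra.
Qed.

Lemma next_promise_range y : L <= next_promise W y <= U.
Proof.
rewrite /next_promise; have [lam0|lam_neq0] := eqVneq lam 0.
  by rewrite lam0 invr0 mulr0 L_le0 U_ge0.
have lam_gt0 : 0 < lam by rewrite lt_def lam_neq0.
rewrite ler_pdivlMr // ler_pdivrMr //.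
have [_ aim_ge aim_eq] := aim_cases W; case/andP: W_range => L_le W_le.
move: aim_ge (phiY_ge y) (phiY_le y) L_fix U_fix LU_gap.
by case: aim_eq => -> *; apply/andP; split; lra.
Qed.

Lemma aim_next_promise y : aim W + phiY y = W - lam * next_promise W y.
Proof.
have [lam0|lam_neq0] := eqVneq lam 0; last first.
  by rewrite /next_promise (mulrC lam) divfK //; ring.
have [_ aim_ge [aim_eq|aim_eq]] := aim_cases W; case/andP: W_range => L_le W_le.
all: move: LU_gap L_fix U_fix aim_ge; rewrite aim_eq lam0 !mul0r !subr0.
all: by have := phiY_ge y; have := phiY_le y; lra.
Qed.

End InRange.

Lemma promise_rcons h xy : promise (rcons h xy) = next_promise (promise h) xy.2.
Proof. by rewrite /promise foldl_rcons. Qed.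

Lemma promise_range h : L <= promise h <= U.
Proof.
elim/last_ind: h => [|h xy IHh]; first by rewrite /promise /= L_le0 U_ge0.
by rewrite promise_rcons next_promise_range.
Qed.

Lemma autocrat_mean h : is_dist (autocrat h) /\ mean (autocrat h) phiX = aim (promise h).
Proof. exact/mix2_interp/aim_range/promise_range. Qed.

Lemma autocrat_strat : is_stratX autocrat.
Proof. by move=> h; case: (autocrat_mean h). Qed.

Lemma stage_payoff_autocrat sY t : is_stratY sY ->
  stage_payoff (fun x y => phiX x + phiY y) autocrat sY t =
  expect autocrat sY t promise - lam * expect autocrat sY t.+1 promise.
Proof.
move=> sY_strat.
rewrite (stage_payoff_add autocrat_strat sY_strat) expectS -mulNr -expect_lin.
apply: eq_bigr => h _; congr (_ * _).
have [_ ->] := autocrat_mean h.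
rewrite /next_expect; under eq_bigr do under eq_bigr do rewrite promise_rcons /=.
rewrite sum_prod_snd; last exact: autocrat_strat.
rewrite -[mean _ phiY]mul1r -!mean_affine //.
by apply: eq_bigr => y _; rewrite mul1r mulNr aim_next_promise ?promise_range.
Qed.

Lemma autocrat_autocratic : autocratic (fun x y => phiX x + phiY y) lam autocrat.
Proof.
move=> sY sY_strat.
under eq_fun do under eq_bigr do rewrite stage_payoff_autocrat //.
apply: (@discounted_telescope_cvg0 R lam lam_ge0 lam_lt1
         (fun t => expect autocrat sY t promise) (U - L)) => [|t].
  by rewrite expect0.
have L_le : L <= expect autocrat sY t promise.
  by apply: (expect_ge autocrat_strat sY_strat) => h; case/andP: (promise_range h).
have le_U : expect autocrat sY t promise <= U.
  by apply: (expect_le autocrat_strat sY_strat) => h; case/andP: (promise_range h).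
by rewrite ler_norml; move: L_le0 U_ge0 => *; apply/andP; split; lra.
Qed.

Lemma autocratic_additive_sufficient :
  exists sX : stratX R SX SY, is_stratX sX /\ autocratic (fun x y => phiX x + phiY y) lam sX.
Proof. by exists autocrat; split; [exact: autocrat_strat | exact: autocrat_autocratic]. Qed.

End Sufficiency.

Section Extrema.
Variables (R : realType) (S : finType) (s0 : S) (f : S -> R).

Lemma fmax_ge s : f s <= fmax s0 f.
Proof. exact: le_bigmax. Qed.

Lemma fmin_le s : fmin s0 f <= f s.
Proof. exact: bigmin_le. Qed.

Lemma fmax_attained : exists s, fmax s0 f = f s.
Proof.
rewrite /fmax; elim/big_ind: _ => [|u v [su ->] [sv ->]|s _]; [by exists s0| |by exists s].
by rewrite maxEle; case: ifP => _; [exists sv | exists su].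
Qed.

Lemma fmin_attained : exists s, fmin s0 f = f s.
Proof.
rewrite /fmin; elim/big_ind: _ => [|u v [su ->] [sv ->]|s _]; [by exists s0| |by exists s].
by rewrite minEle; case: ifP => _; [exists su | exists sv].
Qed.

End Extrema.

Lemma phi_mixed_add (R : realType) (SX SY : finType) (phiX : SX -> R) (phiY : SY -> R)
    (tau : {ffun SX -> R}) (y : SY) :
  is_dist tau -> phi_mixed (fun x y => phiX x + phiY y) tau y = mean tau phiX + phiY y.
Proof.
case=> _ sum_tau; rewrite /phi_mixed; under eq_bigr do rewrite mulrDr.
by rewrite big_split /= -mulr_suml sum_tau mul1r.
Qed.

Section Conditions.
Variables (R : realType) (SX SY : finType) (phiX : SX -> R) (phiY : SY -> R).
Variables (lam : R) (xm xM : SX) (ya yb : SY).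
Local Notation m := (phiX xm).
Local Notation M := (phiX xM).
Local Notation a := (phiY ya).
Local Notation b := (phiY yb).
Local Notation phi := (fun x y => phiX x + phiY y).
Hypotheses (phiX_ge : forall x, m <= phiX x) (phiX_le : forall x, phiX x <= M).
Hypotheses (phiY_ge : forall y, a <= phiY y) (phiY_le : forall y, phiY y <= b).

Lemma PhiPlus_additive : PhiPlus phi !=set0 <-> 0 <= M + a.
Proof.
split=> [[tau [tau_dist tau_ge0]] | Ma_ge0].
  by apply: le_trans (tau_ge0 ya) _; rewrite phi_mixed_add // lerD2r mean_le.
exists (point_dist R xM); split=> [|y]; first exact: point_dist_is_dist.
rewrite phi_mixed_add ?mean_point_dist; last exact: point_dist_is_dist.
by rewrite (le_trans Ma_ge0) ?lerD2l.
Qed.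

Lemma PhiMinus_additive : PhiMinus phi !=set0 <-> m + b <= 0.
Proof.
split=> [[tau [tau_dist tau_le0]] | mb_le0].
  by apply: le_trans (tau_le0 yb); rewrite phi_mixed_add // lerD2r mean_ge.
exists (point_dist R xm); split=> [|y]; first exact: point_dist_is_dist.
rewrite phi_mixed_add ?mean_point_dist; last exact: point_dist_is_dist.
by rewrite (le_trans _ mb_le0) ?lerD2l.
Qed.

Lemma constant_iff_extrema_eq : (forall x x', phiX x = phiX x') <-> M = m.
Proof.
split=> [const | M_eq_m x x']; first exact: const.
by move: (phiX_le x) (phiX_ge x) (phiX_le x') (phiX_ge x'); rewrite M_eq_m; lra.
Qed.

Lemma lambda_min_condition : 0 <= M + a -> m + b <= 0 ->
  (forall x x', phiX x = phiX x') \/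
    (~ (forall x x', phiX x = phiX x') /\ (b - a) / (M - m) <= lam) <->
  b - a <= lam * (M - m).
Proof.
move=> Ma_ge0 mb_le0; rewrite constant_iff_extrema_eq.
have gap_gt0 : M != m -> 0 < M - m by rewrite subr_gt0 lt_def => ->; apply: phiX_ge.
split=> [[M_eq_m | [/eqP/gap_gt0 gap_pos]] | gap_le].
- by rewrite M_eq_m subrr mulr0; move: Ma_ge0 mb_le0 M_eq_m; lra.
- by rewrite ler_pdivrMr // mulrC.
have [M_eq_m|M_neq_m] := eqVneq M m; [by left | right; split; first exact/eqP].
by rewrite ler_pdivrMr ?gap_gt0 // mulrC.
Qed.

End Conditions.

Theorem proposition5 (R : realType) (SX SY : finType) (x0 : SX) (y0 : SY)
    (lam : R) (phiX : SX -> R) (phiY : SY -> R) :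
  0 <= lam -> lam < 1 ->
  let phi := fun (x : SX) (y : SY) => phiX x + phiY y in
  (exists sX : stratX R SX SY, is_stratX sX /\ autocratic phi lam sX) <->
  (PhiPlus phi !=set0 /\ PhiMinus phi !=set0 /\
   ((forall x x' : SX, phiX x = phiX x') \/
    (~ (forall x x' : SX, phiX x = phiX x') /\
     lambda_min x0 y0 phiX phiY <= lam))).
Proof.
move=> lam_ge0 lam_lt1 phi.
have [xM eM] := fmax_attained x0 phiX; have [xm em] := fmin_attained x0 phiX.
have [yb eb] := fmax_attained y0 phiY; have [ya ea] := fmin_attained y0 phiY.
have phiX_le x : phiX x <= phiX xM by rewrite -eM fmax_ge.
have phiX_ge x : phiX xm <= phiX x by rewrite -em fmin_le.
have phiY_le y : phiY y <= phiY yb by rewrite -eb fmax_ge.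
have phiY_ge y : phiY ya <= phiY y by rewrite -ea fmin_le.
rewrite /lambda_min eM em eb ea.
rewrite (PhiPlus_additive phiX_le phiY_ge) (PhiMinus_additive phiX_ge phiY_le).
split=> [[sX [sX_strat sX_auto]] | [Ma_ge0 [mb_le0 cond]]].
  have [Ma_ge0 mb_le0 gap_le] :=
    autocratic_additive_necessary lam_ge0 lam_lt1 phiX_ge phiX_le sX_strat sX_auto ya yb.
  by do 2!split=> //; apply/(lambda_min_condition lam phiX_ge phiX_le Ma_ge0 mb_le0).
apply: (autocratic_additive_sufficient lam_ge0 lam_lt1 (phiX_ge xM) phiY_ge phiY_le
          Ma_ge0 mb_le0).
exact/(lambda_min_condition lam phiX_ge phiX_le Ma_ge0 mb_le0).
Qed.
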